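(* The set $\mathcal U\setminus(A_1\cup A_2\cup A_3)$ has four connected components $\mathcal U_0,\mathcal U_1,\mathcal U_2,\mathcal U_3$ ($\mathcal U_0$ the central triangle with vertices $a_1,a_2,a_3$, and $\mathcal U_i$ the region bounded by $A_i$ and $Q$), and $f$ maps each $\mathcal U_j$ homeomorphically onto $\mathcal U$.
   Context: $f=g\circ h$ with $g[x_1:x_2:x_3]=[x_1^2:x_2^2:x_3^2]$ and $h[x_1:x_2:x_3]=[x_1(-x_1+x_2+x_3):x_2(x_1-x_2+x_3):x_3(x_1+x_2-x_3)]$. $a_1=[0:1:1]$, $a_2=[1:0:1]$, $a_3=[1:1:0]$; $A_i$ is the line through $\{a_1,a_2,a_3\}\setminus\{a_i\}$. $Q=\{\rho=0\}$ with $\rho=x_1^2+x_2^2+x_3^2-2(x_1x_2+x_2x_3+x_3x_1)$, and $\mathcal U=\{[x]\in\mathbb{RP}^2:\rho(x)<0\}$, an open disk in $\mathbb{RP}^2$ with $a_1,a_2,a_3$ on its boundary. *)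

(* classical reals.  RP^2 is handled through the affine chart
   {x1+x2+x3 <> 0}, normalised as {x1+x2+x3 = 1}; U lies inside it. *)
From Stdlib Require Import Reals.
Open Scope R_scope.

Record pt := P3 { c1 : R; c2 : R; c3 : R }.

Definition dist (x y : pt) : R :=
  sqrt ((c1 x - c1 y)^2 + (c2 x - c2 y)^2 + (c3 x - c3 y)^2).

Definition set := pt -> Prop.
Definition seteq (A B : set) : Prop := forall x, A x <-> B x.
Definition subset (A B : set) : Prop := forall x, A x -> B x.

Definition open (O : set) : Prop :=
  forall x, O x -> exists e, 0 < e /\ forall y, dist x y < e -> O y.

Definition connected (S : set) : Prop :=
  forall O1 O2 : set, open O1 -> open O2 ->
    (forall x, S x -> O1 x \/ O2 x) ->
    (forall x, S x -> O1 x -> O2 x -> False) ->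
    (forall x, S x -> ~ O1 x) \/ (forall x, S x -> ~ O2 x).

Definition is_component (S C : set) : Prop :=
  (exists x, C x) /\ subset C S /\ connected C /\
  forall D : set, subset D S -> connected D -> subset C D -> subset D C.

Definition continuous_on (A : set) (g : pt -> pt) : Prop :=
  forall x, A x -> forall e, 0 < e -> exists d, 0 < d /\
    forall y, A y -> dist x y < d -> dist (g x) (g y) < e.

Definition homeo_onto (g : pt -> pt) (A B : set) : Prop :=
  (forall x, A x -> B (g x)) /\ continuous_on A g /\
  exists k : pt -> pt,
    (forall y, B y -> A (k y)) /\
    (forall x, A x -> k (g x) = x) /\
    (forall y, B y -> g (k y) = y) /\
    continuous_on B k.

Definition gmap (x : pt) : pt := P3 (c1 x ^ 2) (c2 x ^ 2) (c3 x ^ 2).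
Definition hmap (x : pt) : pt :=
  P3 (c1 x * (- c1 x + c2 x + c3 x))
     (c2 x * (c1 x - c2 x + c3 x))
     (c3 x * (c1 x + c2 x - c3 x)).
(* homogeneous lift of f = g o h *)
Definition fhom (x : pt) : pt := gmap (hmap x).

Definition nrm (y : pt) : pt :=
  let s := c1 y + c2 y + c3 y in P3 (c1 y / s) (c2 y / s) (c3 y / s).

(* f expressed in the chart *)
Definition fchart (x : pt) : pt := nrm (fhom x).

Definition a1 : pt := P3 0 1 1.
Definition a2 : pt := P3 1 0 1.
Definition a3 : pt := P3 1 1 0.

Definition det3 (x y z : pt) : R :=
    c1 x * (c2 y * c3 z - c3 y * c2 z)
  - c2 x * (c1 y * c3 z - c3 y * c1 z)
  + c3 x * (c1 y * c2 z - c2 y * c1 z).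

Definition A1 : set := fun x => det3 x a2 a3 = 0.
Definition A2 : set := fun x => det3 x a1 a3 = 0.
Definition A3 : set := fun x => det3 x a1 a2 = 0.

Definition rho (x : pt) : R :=
  c1 x ^ 2 + c2 x ^ 2 + c3 x ^ 2 - 2 * (c1 x * c2 x + c2 x * c3 x + c3 x * c1 x).

Definition chart : set := fun x => c1 x + c2 x + c3 x = 1.
Definition U : set := fun x => chart x /\ rho x < 0.

Definition Uminus : set := fun x => U x /\ ~ A1 x /\ ~ A2 x /\ ~ A3 x.

(* "x lies on the same side of A_i as a_i" (meaningful in the chart) *)
Definition side1 (x : pt) : R := det3 x a2 a3 * det3 a1 a2 a3.
Definition side2 (x : pt) : R := det3 x a1 a3 * det3 a2 a1 a3.
Definition side3 (x : pt) : R := det3 x a1 a2 * det3 a3 a1 a2.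

(* U_0: the open central triangle with vertices a1 a2 a3;
   U_i: the part of U on the other side of A_i than the triangle
        (the region bounded by A_i and Q) *)
Definition Ucomp (j : nat) : set :=
  match j with
  | O => fun x => U x /\ 0 < side1 x /\ 0 < side2 x /\ 0 < side3 x
  | 1%nat => fun x => U x /\ side1 x < 0
  | 2%nat => fun x => U x /\ side2 x < 0
  | _ => fun x => U x /\ side3 x < 0
  end.

(* The lines A_i are {L_i = 0} with L_1 = -x1+x2+x3, L_2 = x1-x2+x3,
   L_3 = x1+x2-x3.  On U all coordinates are positive and L_i + L_j = 2 x_k > 0,
   so at most one L_i is negative: U minus the three lines splits according to
   the sign pattern of (L_1, L_2, L_3) into four convex pieces, each cut out by
   open conditions, and these are the components.
   Since h(x) = (x_i L_i(x))_i satisfies h(h(x)) = L_1 L_2 L_3(x) x and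
   rho(g(h(x))) = rho(x) (L_1 L_2 L_3(x))^2, f maps each piece into U; on U_j it
   is inverted by taking square roots of the coordinates with the signs of
   (L_1, L_2, L_3) on U_j and applying h. *)

From Stdlib Require Import Reals Psatz ClassicalDescription.
Open Scope R_scope.

(** * Continuity on subsets of R^3 *)

Definition Rcont_on (A : set) (F : pt -> R) : Prop :=
  forall x, A x -> forall e, 0 < e -> exists d, 0 < d /\
    forall y, A y -> dist x y < d -> Rabs (F x - F y) < e.

Lemma Rabs_le_sqrt_sum a b c : Rabs a <= sqrt (a ^ 2 + b ^ 2 + c ^ 2).
Proof.
  rewrite <- (sqrt_pow2 (Rabs a)) by apply Rabs_pos.
  apply sqrt_le_1_alt. rewrite pow2_abs.
  pose proof (pow2_ge_0 b); pose proof (pow2_ge_0 c); lra.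
Qed.

Lemma sqrt_sum_le_Rabs a b c : sqrt (a ^ 2 + b ^ 2 + c ^ 2) <= Rabs a + Rabs b + Rabs c.
Proof.
  pose proof (Rabs_pos a); pose proof (Rabs_pos b); pose proof (Rabs_pos c).
  rewrite <- (sqrt_pow2 (Rabs a + Rabs b + Rabs c)) by lra.
  apply sqrt_le_1_alt. rewrite <- (pow2_abs a), <- (pow2_abs b), <- (pow2_abs c). nra.
Qed.

Lemma Rcont_c1 A : Rcont_on A c1.
Proof.
  intros x _ e He; exists e; split; [exact He|]; intros y _ Hy.
  eapply Rle_lt_trans; [apply Rabs_le_sqrt_sum|exact Hy].
Qed.

Lemma Rcont_c2 A : Rcont_on A c2.
Proof.
  intros x _ e He; exists e; split; [exact He|]; intros y _ Hy.
  eapply Rle_lt_trans; [|exact Hy]. unfold dist.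
  replace (_ + _ + _) with ((c2 x - c2 y) ^ 2 + (c1 x - c1 y) ^ 2 + (c3 x - c3 y) ^ 2) by ring.
  apply Rabs_le_sqrt_sum.
Qed.

Lemma Rcont_c3 A : Rcont_on A c3.
Proof.
  intros x _ e He; exists e; split; [exact He|]; intros y _ Hy.
  eapply Rle_lt_trans; [|exact Hy]. unfold dist.
  replace (_ + _ + _) with ((c3 x - c3 y) ^ 2 + (c1 x - c1 y) ^ 2 + (c2 x - c2 y) ^ 2) by ring.
  apply Rabs_le_sqrt_sum.
Qed.

Lemma Rcont_const A c : Rcont_on A (fun _ => c).
Proof.
  intros x _ e He; exists 1; split; [lra|]; intros.
  rewrite Rminus_diag, Rabs_R0; exact He.
Qed.

Lemma Rcont_ext A F G : Rcont_on A F -> (forall x, A x -> F x = G x) -> Rcont_on A G.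
Proof.
  intros HF E x Ax e He. destruct (HF x Ax e He) as [d [Hd K]].
  exists d; split; [exact Hd|]. intros y Ay Hy. rewrite <- (E x Ax), <- (E y Ay). auto.
Qed.

Lemma Rcont_plus A F G : Rcont_on A F -> Rcont_on A G -> Rcont_on A (fun x => F x + G x).
Proof.
  intros HF HG x Ax e He.
  destruct (HF x Ax (e / 2)) as [d1 [Hd1 K1]]; [lra|].
  destruct (HG x Ax (e / 2)) as [d2 [Hd2 K2]]; [lra|].
  exists (Rmin d1 d2); split; [apply Rmin_pos; assumption|]. intros y Ay Hy.
  assert (Hy1 := K1 y Ay (Rlt_le_trans _ _ _ Hy (Rmin_l _ _))).
  assert (Hy2 := K2 y Ay (Rlt_le_trans _ _ _ Hy (Rmin_r _ _))).
  replace (F x + G x - (F y + G y)) with ((F x - F y) + (G x - G y)) by ring.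
  eapply Rle_lt_trans; [apply Rabs_triang|lra].
Qed.

Lemma Rcont_comp A F (f : R -> R) :
  Rcont_on A F -> (forall x, A x -> continuity_pt f (F x)) -> Rcont_on A (fun x => f (F x)).
Proof.
  intros HF Hf x Ax e He.
  destruct (Hf x Ax e He) as [a [Ha Kf]].
  destruct (HF x Ax a Ha) as [d [Hd K]].
  exists d; split; [exact Hd|]. intros y Ay Hy; cbv beta.
  destruct (Req_dec (F y) (F x)) as [E|Hne].
  - rewrite E, Rminus_diag, Rabs_R0; exact He.
  - rewrite Rabs_minus_sym. apply (Kf (F y)). split; [split; [exact I|congruence]|].
    simpl; unfold R_dist. rewrite Rabs_minus_sym. exact (K y Ay Hy).
Qed.

Lemma Rcont_opp A F : Rcont_on A F -> Rcont_on A (fun x => - F x).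
Proof.
  intro H. apply (Rcont_comp A F Ropp H). intros.
  apply derivable_continuous_pt; reg.
Qed.

Lemma Rcont_minus A F G : Rcont_on A F -> Rcont_on A G -> Rcont_on A (fun x => F x - G x).
Proof. intros; apply Rcont_plus, Rcont_opp; assumption. Qed.

Lemma Rcont_pow A F n : Rcont_on A F -> Rcont_on A (fun x => F x ^ n).
Proof.
  intro H. apply (Rcont_comp A F (fun u => u ^ n) H). intros.
  apply derivable_continuous_pt; reg.
Qed.

Lemma Rcont_mult A F G : Rcont_on A F -> Rcont_on A G -> Rcont_on A (fun x => F x * G x).
Proof.
  intros HF HG.
  apply Rcont_ext with (fun x => ((F x + G x) ^ 2 - (F x - G x) ^ 2) / 4).
  - apply (Rcont_comp A _ (fun u => u / 4)).
    + apply Rcont_minus; apply Rcont_pow; [apply Rcont_plus|apply Rcont_minus]; assumption.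
    + intros; apply derivable_continuous_pt; reg.
  - intros; field.
Qed.

Lemma Rcont_inv A F : Rcont_on A F -> (forall x, A x -> F x <> 0) -> Rcont_on A (fun x => / F x).
Proof.
  intros H Hn. apply (Rcont_comp A F Rinv H). intros x Ax.
  apply derivable_continuous_pt; reg. apply Hn, Ax.
Qed.

Lemma Rcont_sqrt A F : Rcont_on A F -> (forall x, A x -> 0 <= F x) -> Rcont_on A (fun x => sqrt (F x)).
Proof. intros H Hp. apply (Rcont_comp A F sqrt H). intros; apply continuity_pt_sqrt; auto. Qed.

(** * Connectedness *)

Definition clamp (t : R) : R := Rmax 0 (Rmin 1 t).

Lemma clamp_in t : 0 <= clamp t <= 1.
Proof. unfold clamp, Rmax, Rmin; repeat destruct Rle_dec; lra. Qed.

Lemma clamp_id t : 0 <= t <= 1 -> clamp t = t.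
Proof. unfold clamp, Rmax, Rmin; repeat destruct Rle_dec; lra. Qed.

Lemma clamp_lip s t : Rabs (clamp s - clamp t) <= Rabs (s - t).
Proof. unfold clamp, Rmax, Rmin; repeat destruct Rle_dec; unfold Rabs; repeat destruct Rcase_abs; lra. Qed.

Definition path_in (S : set) (x y : pt) (p : R -> pt) : Prop :=
  p 0 = x /\ p 1 = y /\ (forall t, 0 <= t <= 1 -> S (p t)) /\
  forall t, 0 <= t <= 1 -> forall e, 0 < e -> exists d, 0 < d /\
    forall s, 0 <= s <= 1 -> Rabs (s - t) < d -> dist (p t) (p s) < e.

Lemma path_connected_connected S :
  (forall x y, S x -> S y -> exists p, path_in S x y p) -> connected S.
Proof.
  intros Hpath O1 O2 HO1 HO2 Hcov Hdis.
  destruct (classic (exists x, S x /\ O1 x)) as [[x [Sx O1x]]|no1];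
    [right|left; intros z Sz O1z; apply no1; exists z; auto].
  intros y Sy O2y.
  destruct (Hpath x y Sx Sy) as [p [p0 [p1 [pS pc]]]].
  (* the indicator of O2 along the (clamped) path is locally constant, hence continuous *)
  set (f := fun t => if excluded_middle_informative (O2 (p (clamp t))) then 1 else -1).
  assert (stay : forall t O, open O -> O (p (clamp t)) ->
            exists d, 0 < d /\ forall s, Rabs (s - t) < d -> O (p (clamp s))).
  { intros t O HO Ot. destruct (HO _ Ot) as [e [He Ke]].
    destruct (pc _ (clamp_in t) e He) as [d [Hd Kd]].
    exists d; split; [exact Hd|]. intros s Hs.
    apply Ke, Kd; [apply clamp_in|]. eapply Rle_lt_trans; [apply clamp_lip|exact Hs]. }
  assert (f_cont : continuity f).
  { intros t e He.
    assert (const : exists d, 0 < d /\ forall s, Rabs (s - t) < d -> f s = f t).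
    { unfold f. destruct (excluded_middle_informative (O2 (p (clamp t)))) as [o2|no2].
      - destruct (stay t O2 HO2 o2) as [d [Hd K]]. exists d; split; [exact Hd|].
        intros s Hs. destruct excluded_middle_informative as [|n]; [reflexivity|].
        exfalso; apply n, K, Hs.
      - assert (o1 : O1 (p (clamp t))) by (destruct (Hcov _ (pS _ (clamp_in t))); tauto).
        destruct (stay t O1 HO1 o1) as [d [Hd K]]. exists d; split; [exact Hd|].
        intros s Hs. destruct excluded_middle_informative as [o|]; [|reflexivity].
        exfalso; apply (Hdis (p (clamp s))); [apply pS, clamp_in|apply K, Hs|exact o]. }
    destruct const as [d [Hd K]]. exists d; split; [exact Hd|].
    intros s [_ Hs]. simpl; unfold R_dist. rewrite (K s Hs), Rminus_diag, Rabs_R0. exact He. }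
  assert (f0 : f 0 < 0).
  { unfold f. rewrite clamp_id, p0 by lra.
    destruct excluded_middle_informative as [o|]; [exfalso; exact (Hdis x Sx O1x o)|lra]. }
  assert (f1 : 0 < f 1).
  { unfold f. rewrite clamp_id, p1 by lra.
    destruct excluded_middle_informative; [lra|contradiction]. }
  destruct (IVT f 0 1 f_cont ltac:(lra) f0 f1) as [t [_ Ht]].
  revert Ht. unfold f. destruct excluded_middle_informative; lra.
Qed.

Definition seg (x y : pt) (t : R) : pt :=
  P3 (c1 x + t * (c1 y - c1 x)) (c2 x + t * (c2 y - c2 x)) (c3 x + t * (c3 y - c3 x)).

Definition convex (S : set) : Prop :=
  forall x y t, S x -> S y -> 0 <= t <= 1 -> S (seg x y t).

Lemma dist_seg x y s t : dist (seg x y t) (seg x y s) = Rabs (t - s) * dist x y.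
Proof.
  unfold dist, seg; simpl.
  rewrite <- (sqrt_pow2 (Rabs (t - s))) by apply Rabs_pos.
  rewrite <- sqrt_mult_alt by apply pow2_ge_0. f_equal. rewrite pow2_abs. ring.
Qed.

Lemma convex_connected S : convex S -> connected S.
Proof.
  intro HS. apply path_connected_connected. intros x y Sx Sy.
  exists (seg x y). repeat split.
  - destruct x; unfold seg; simpl; f_equal; ring.
  - destruct y; unfold seg; simpl; f_equal; ring.
  - intros t Ht; apply HS; assumption.
  - intros t _ e He. set (D := dist x y).
    assert (HD : 0 <= D) by apply sqrt_pos.
    exists (e / (D + 1)); split; [apply Rdiv_lt_0_compat; lra|].
    intros s _ Hs. rewrite dist_seg, Rabs_minus_sym. fold D.
    apply Rle_lt_trans with (e / (D + 1) * D).
    + apply Rmult_le_compat_r; lra.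
    + replace (e / (D + 1) * D) with (e - e / (D + 1)) by (field; lra).
      assert (0 < e / (D + 1)) by (apply Rdiv_lt_0_compat; lra). lra.
Qed.

Lemma connected_ext A B : seteq A B -> connected A -> connected B.
Proof.
  intros E C O1 O2 H1 H2 Hc Hd. destruct (C O1 O2 H1 H2) as [h|h].
  - intros; apply Hc, E; auto.
  - intros x Ax; apply Hd, E; auto.
  - left; intros x Bx; apply h, E; auto.
  - right; intros x Bx; apply h, E; auto.
Qed.

Lemma connected_in_part D O1 O2 : connected D -> open O1 -> open O2 ->
  (forall x, D x -> O1 x \/ O2 x) -> (forall x, D x -> O1 x -> O2 x -> False) ->
  (exists x, D x /\ O1 x) -> forall x, D x -> O1 x.
Proof.
  intros C H1 H2 Hc Hd [x [Dx O1x]] y Dy.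
  destruct (C O1 O2 H1 H2 Hc Hd) as [h|h]; [exfalso; exact (h x Dx O1x)|].
  destruct (Hc y Dy) as [|o2]; [assumption|exfalso; exact (h y Dy o2)].
Qed.

Lemma open_pos F : Rcont_on (fun _ => True) F -> open (fun x => 0 < F x).
Proof.
  intros H x Hx. destruct (H x I (F x) Hx) as [d [Hd K]]. exists d; split; [exact Hd|].
  intros y Hy. specialize (K y I Hy). unfold Rabs in K; destruct Rcase_abs; lra.
Qed.

Lemma open_and O1 O2 : open O1 -> open O2 -> open (fun x => O1 x /\ O2 x).
Proof.
  intros H1 H2 x [o1 o2]. destruct (H1 x o1) as [d1 [P1 K1]]. destruct (H2 x o2) as [d2 [P2 K2]].
  exists (Rmin d1 d2). split; [apply Rmin_pos; auto|]. intros y Hy. split.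
  - apply K1. eapply Rlt_le_trans; [exact Hy|apply Rmin_l].
  - apply K2. eapply Rlt_le_trans; [exact Hy|apply Rmin_r].
Qed.

Lemma open_exists {I : Type} (Q : I -> Prop) (O : I -> set) :
  (forall i, Q i -> open (O i)) -> open (fun x => exists i, Q i /\ O i x).
Proof.
  intros H x [i [Qi Oi]]. destruct (H i Qi x Oi) as [d [Hd K]].
  exists d; split; [exact Hd|]. intros y Hy. exists i; auto.
Qed.

(** * The regions U_j *)

Definition L1 (x : pt) : R := - c1 x + c2 x + c3 x.
Definition L2 (x : pt) : R := c1 x - c2 x + c3 x.
Definition L3 (x : pt) : R := c1 x + c2 x - c3 x.

Lemma A1_iff x : A1 x <-> L1 x = 0.
Proof. unfold A1, det3, L1, a2, a3; simpl; split; intro; lra. Qed.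
Lemma A2_iff x : A2 x <-> L2 x = 0.
Proof. unfold A2, det3, L2, a1, a3; simpl; split; intro; lra. Qed.
Lemma A3_iff x : A3 x <-> L3 x = 0.
Proof. unfold A3, det3, L3, a1, a2; simpl; split; intro; lra. Qed.

Lemma side1E x : side1 x = 2 * L1 x.
Proof. unfold side1, det3, L1, a1, a2, a3; simpl; ring. Qed.
Lemma side2E x : side2 x = 2 * L2 x.
Proof. unfold side2, det3, L2, a1, a2, a3; simpl; ring. Qed.
Lemma side3E x : side3 x = 2 * L3 x.
Proof. unfold side3, det3, L3, a1, a2, a3; simpl; ring. Qed.

Definition positive (v : pt) : Prop := 0 < c1 v /\ 0 < c2 v /\ 0 < c3 v.

Lemma U_positive x : U x -> positive x.
Proof.
  unfold U, chart, rho, positive; intros [Hc Hr].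
  assert (0 < c1 x * c2 x) by (pose proof (pow2_ge_0 (c1 x + c2 x - c3 x)); nra).
  assert (0 < c1 x * c3 x) by (pose proof (pow2_ge_0 (c1 x - c2 x + c3 x)); nra).
  assert (0 < c2 x * c3 x) by (pose proof (pow2_ge_0 (- c1 x + c2 x + c3 x)); nra).
  destruct (Rlt_or_le 0 (c1 x)); [split; [assumption|split; nra]|].
  assert (c1 x < 0) by nra. nra.
Qed.

(* L_i + L_j = 2 x_k: at most one of the L_i is negative on U *)
Lemma U_L_sums x : U x -> 0 < L1 x + L2 x /\ 0 < L1 x + L3 x /\ 0 < L2 x + L3 x.
Proof. intro H; destruct (U_positive x H) as [? [? ?]]; unfold L1, L2, L3; lra. Qed.

Definition sgn (j i : nat) : R := if Nat.eqb j i then -1 else 1.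

Definition signs (j : nat) (x : pt) : Prop :=
  0 < sgn j 1 * L1 x /\ 0 < sgn j 2 * L2 x /\ 0 < sgn j 3 * L3 x.

Lemma Ucomp_signs j x : (j <= 3)%nat -> Ucomp j x <-> U x /\ signs j x.
Proof.
  intro Hj; unfold signs, sgn.
  destruct j as [|[|[|[|j]]]]; [..|lia]; simpl; rewrite ?side1E, ?side2E, ?side3E;
    split; intros [HU H]; pose proof (U_L_sums x HU); split; try assumption; lra.
Qed.

Lemma Uminus_iff x : Uminus x <-> U x /\ L1 x <> 0 /\ L2 x <> 0 /\ L3 x <> 0.
Proof. unfold Uminus. rewrite A1_iff, A2_iff, A3_iff. tauto. Qed.

Lemma Ucomp_Uminus j x : (j <= 3)%nat -> Ucomp j x -> Uminus x.
Proof.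
  intros Hj H. apply Ucomp_signs in H as [HU [s1 [s2 s3]]]; [|exact Hj]. apply Uminus_iff.
  split; [exact HU|]; repeat split; intro E; rewrite E in *; lra.
Qed.

Lemma Uminus_cover x : Uminus x -> exists j, (j <= 3)%nat /\ Ucomp j x.
Proof.
  intro H; apply Uminus_iff in H as [HU [n1 [n2 n3]]].
  pose proof (U_L_sums x HU).
  assert (Hj : exists j, (j <= 3)%nat /\ signs j x).
  { unfold signs, sgn.
    destruct (Rlt_or_le (L1 x) 0); [exists 1%nat; simpl; split; [lia|lra]|].
    destruct (Rlt_or_le (L2 x) 0); [exists 2%nat; simpl; split; [lia|lra]|].
    destruct (Rlt_or_le (L3 x) 0); [exists 3%nat; simpl; split; [lia|lra]|].
    exists 0%nat; simpl; split; [lia|].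
    repeat split; lra. }
  destruct Hj as [j [Hj Hs]]. exists j; split; [exact Hj|]. apply Ucomp_signs; auto.
Qed.

Lemma Ucomp_disjoint i j x : (i <= 3)%nat -> (j <= 3)%nat -> Ucomp i x -> Ucomp j x -> i = j.
Proof.
  intros Hi Hj Hxi Hxj.
  apply Ucomp_signs in Hxi as [HU Hsi]; [|exact Hi]. apply Ucomp_signs in Hxj as [_ Hsj]; [|exact Hj].
  pose proof (U_L_sums x HU). revert Hsi Hsj. unfold signs, sgn.
  destruct i as [|[|[|[|i]]]]; try lia; destruct j as [|[|[|[|j]]]]; try lia; simpl; lra.
Qed.

Lemma rho_nonneg_plane d : c1 d + c2 d + c3 d = 0 -> 0 <= rho d.
Proof.
  intro H. unfold rho. replace (c3 d) with (- c1 d - c2 d) by lra.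
  pose proof (pow2_ge_0 (c1 d + c2 d)); pose proof (pow2_ge_0 (c1 d)); pose proof (pow2_ge_0 (c2 d)). nra.
Qed.

Lemma U_convex : convex U.
Proof.
  intros x y t [Cx Rx] [Cy Ry] Ht. unfold U, chart in *.
  set (d := P3 (c1 y - c1 x) (c2 y - c2 x) (c3 y - c3 x)).
  assert (Hd : 0 <= rho d) by (apply rho_nonneg_plane; unfold d; simpl; lra).
  assert (E : rho (seg x y t) = (1 - t) * rho x + t * rho y - t * (1 - t) * rho d)
    by (unfold rho, seg, d; simpl; ring).
  unfold seg at 1; simpl. split; [nra|]. rewrite E.
  assert (0 <= t * (1 - t) * rho d) by (apply Rmult_le_pos; nra).
  destruct (Rle_or_lt (rho x) (rho y)); nra.
Qed.

Lemma Ucomp_convex j : (j <= 3)%nat -> convex (Ucomp j).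
Proof.
  intros Hj x y t Hx Hy Ht.
  apply Ucomp_signs in Hx as [Ux [s1 [s2 s3]]]; [|exact Hj].
  apply Ucomp_signs in Hy as [Uy [r1 [r2 r3]]]; [|exact Hj].
  apply Ucomp_signs; [exact Hj|]. split; [apply U_convex; assumption|].
  assert (mix : forall s a b, 0 < s * a -> 0 < s * b -> 0 < s * ((1 - t) * a + t * b)).
  { intros s a b Ha Hb. replace (s * ((1 - t) * a + t * b)) with ((1 - t) * (s * a) + t * (s * b)) by ring.
    destruct (Rle_lt_dec t 0); nra. }
  unfold signs.
  replace (L1 (seg x y t)) with ((1 - t) * L1 x + t * L1 y) by (unfold L1, seg; simpl; ring).
  replace (L2 (seg x y t)) with ((1 - t) * L2 x + t * L2 y) by (unfold L2, seg; simpl; ring).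
  replace (L3 (seg x y t)) with ((1 - t) * L3 x + t * L3 y) by (unfold L3, seg; simpl; ring).
  repeat split; apply mix; assumption.
Qed.

Lemma open_signs j : open (signs j).
Proof.
  assert (HL : forall c L, Rcont_on (fun _ => True) L -> open (fun x => 0 < c * L x)).
  { intros c L HL. apply open_pos, Rcont_mult; [apply Rcont_const|exact HL]. }
  repeat apply open_and; apply HL; unfold L1, L2, L3;
    repeat first [apply Rcont_plus | apply Rcont_minus | apply Rcont_opp
                 | apply Rcont_c1 | apply Rcont_c2 | apply Rcont_c3].
Qed.

(* each Ucomp j is the trace on Uminus of the open set [signs j], and these
   traces partition Uminus *)
Lemma connected_in_Ucomp j D : (j <= 3)%nat -> subset D Uminus -> connected D ->
  (exists x, D x /\ Ucomp j x) -> subset D (Ucomp j).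
Proof.
  intros Hj HD CD [x [Dx Hx]].
  set (others := fun y => exists i, ((i <= 3)%nat /\ i <> j) /\ signs i y).
  assert (Hin : forall y, D y -> signs j y -> Ucomp j y).
  { intros y Dy Hy. apply Ucomp_signs; [exact Hj|]. split; [exact (proj1 (HD y Dy))|exact Hy]. }
  intros y Dy. apply Hin; [exact Dy|].
  apply (connected_in_part D (signs j) others CD (open_signs j)); [| | |exists x|exact Dy].
  - apply open_exists. intros; apply open_signs.
  - intros z Dz. destruct (Uminus_cover z (HD z Dz)) as [i [Hi Hz]].
    apply Ucomp_signs in Hz as [_ Hz]; [|exact Hi].
    destruct (Nat.eq_dec i j) as [->|Hne]; [left; exact Hz|right; exists i; auto].
  - intros z Dz Hz [i [[Hi Hne] Hzi]]. apply Hne.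
    apply (Ucomp_disjoint i j z Hi Hj); [|apply Hin; assumption].
    apply Ucomp_signs; [exact Hi|]. split; [exact (proj1 (HD z Dz))|exact Hzi].
  - split; [exact Dx|]. apply Ucomp_signs in Hx; tauto.
Qed.

Definition Ucomp_point (j : nat) : pt :=
  match j with
  | O => P3 (1/3) (1/3) (1/3)
  | 1%nat => P3 (3/5) (1/5) (1/5)
  | 2%nat => P3 (1/5) (3/5) (1/5)
  | _ => P3 (1/5) (1/5) (3/5)
  end.

Lemma Ucomp_point_in j : Ucomp j (Ucomp_point j).
Proof.
  destruct j as [|[|[|j]]]; simpl; rewrite ?side1E, ?side2E, ?side3E;
    unfold U, chart, rho, L1, L2, L3; simpl; repeat split; lra.
Qed.

Theorem Uminus_components C :
  is_component Uminus C <-> exists j, (j <= 3)%nat /\ seteq C (Ucomp j).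
Proof.
  split.
  - intros [[x Cx] [HC [CC Cmax]]].
    destruct (Uminus_cover x (HC x Cx)) as [j [Hj Hx]].
    assert (CUj := connected_in_Ucomp j C Hj HC CC (ex_intro _ x (conj Cx Hx))).
    exists j; split; [exact Hj|]. intro y; split; [apply CUj|].
    apply Cmax; [intros z; apply Ucomp_Uminus, Hj|apply convex_connected, Ucomp_convex, Hj|exact CUj].
  - intros [j [Hj E]].
    assert (Cp : C (Ucomp_point j)) by apply E, Ucomp_point_in.
    split; [exists (Ucomp_point j); exact Cp|].
    split; [intros y Cy; apply (Ucomp_Uminus j y Hj), E, Cy|].
    split.
    + apply connected_ext with (Ucomp j); [intro y; split; apply E|].
      apply convex_connected, Ucomp_convex, Hj.
    + intros D HD CD CD' y Dy. apply E.
      apply (connected_in_Ucomp j D Hj HD CD); [|exact Dy].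
      exists (Ucomp_point j); split; [apply CD', Cp|apply Ucomp_point_in].
Qed.

Lemma Ucomp_distinct i j : (i <= 3)%nat -> (j <= 3)%nat -> i <> j -> ~ seteq (Ucomp i) (Ucomp j).
Proof.
  intros Hi Hj Hne E. apply Hne, (Ucomp_disjoint i j (Ucomp_point i) Hi Hj);
    [|apply E]; apply Ucomp_point_in.
Qed.

(** * The inverse branches of f *)

Definition scale (c : R) (v : pt) : pt := P3 (c * c1 v) (c * c2 v) (c * c3 v).
Definition ssum (v : pt) : R := c1 v + c2 v + c3 v.
Definition Lprod (v : pt) : R := L1 v * L2 v * L3 v.
Definition twist (j : nat) (v : pt) : pt :=
  P3 (sgn j 1 * c1 v) (sgn j 2 * c2 v) (sgn j 3 * c3 v).
Definition sqrtp (y : pt) : pt := P3 (sqrt (c1 y)) (sqrt (c2 y)) (sqrt (c3 y)).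

Lemma pt_ext u v : c1 u = c1 v -> c2 u = c2 v -> c3 u = c3 v -> u = v.
Proof. destruct u, v; simpl; intros; subst; reflexivity. Qed.

Ltac pt_ring :=
  apply pt_ext; unfold fhom, gmap, hmap, scale, twist, Lprod, L1, L2, L3; simpl; ring.

Lemma hmap_scale c v : hmap (scale c v) = scale (c ^ 2) (hmap v).
Proof. pt_ring. Qed.
Lemma gmap_scale c v : gmap (scale c v) = scale (c ^ 2) (gmap v).
Proof. pt_ring. Qed.
Lemma scale_scale a b v : scale a (scale b v) = scale (a * b) v.
Proof. pt_ring. Qed.
Lemma twist_scale j c v : twist j (scale c v) = scale c (twist j v).
Proof. pt_ring. Qed.

Lemma hmap_hmap v : hmap (hmap v) = scale (Lprod v) v.
Proof. pt_ring. Qed.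

Lemma twist_twist j v : twist j (twist j v) = v.
Proof.
  apply pt_ext; unfold twist, sgn; simpl;
    [destruct (Nat.eqb j 1)|destruct (Nat.eqb j 2)|destruct (Nat.eqb j 3)]; ring.
Qed.

Lemma gmap_twist j v : gmap (twist j v) = gmap v.
Proof.
  apply pt_ext; unfold gmap, twist, sgn; simpl;
    [destruct (Nat.eqb j 1)|destruct (Nat.eqb j 2)|destruct (Nat.eqb j 3)]; ring.
Qed.

Lemma rho_gmap v : rho (gmap v) = - ssum v * Lprod v.
Proof. unfold rho, gmap, ssum, Lprod, L1, L2, L3; simpl; ring. Qed.
Lemma rho_hmap v : rho (hmap v) = rho (gmap v).
Proof. unfold rho, gmap, hmap; simpl; ring. Qed.
Lemma rho_fhom v : rho (fhom v) = rho v * Lprod v ^ 2.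
Proof. unfold rho, fhom, gmap, hmap, Lprod, L1, L2, L3; simpl; ring. Qed.
Lemma rho_scale c v : rho (scale c v) = c ^ 2 * rho v.
Proof. unfold rho, scale; simpl; ring. Qed.
Lemma ssum_scale c v : ssum (scale c v) = c * ssum v.
Proof. unfold ssum, scale; simpl; ring. Qed.

Lemma nrm_as_scale v : nrm v = scale (/ ssum v) v.
Proof. apply pt_ext; unfold nrm, scale, ssum; simpl; unfold Rdiv; ring. Qed.

Lemma nrm_scale_chart c v : c <> 0 -> chart v -> nrm (scale c v) = v.
Proof.
  intros Hc Hv. rewrite nrm_as_scale, ssum_scale, scale_scale.
  replace (ssum v) with 1 by (symmetry; exact Hv).
  replace (/ (c * 1) * c) with 1 by (field; exact Hc).
  apply pt_ext; unfold scale; simpl; ring.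
Qed.

Lemma pow2_pos a : a <> 0 -> 0 < a ^ 2.
Proof. intro H; rewrite <- Rsqr_pow2; apply Rsqr_pos_lt, H. Qed.

Lemma ssum_neq0_of_rho v : rho v < 0 -> ssum v <> 0.
Proof.
  unfold rho, ssum; intros H E. replace (c3 v) with (- c1 v - c2 v) in H by lra. nra.
Qed.

Lemma U_nrm v : rho v < 0 -> U (nrm v).
Proof.
  intro H. pose proof (ssum_neq0_of_rho v H) as Hs. rewrite nrm_as_scale. split.
  - unfold chart. fold (ssum (scale (/ ssum v) v)). rewrite ssum_scale. field; exact Hs.
  - rewrite rho_scale. assert (0 < (/ ssum v) ^ 2) by (apply pow2_pos, Rinv_neq_0_compat, Hs). nra.
Qed.

Lemma Lprod_neq0 x : Uminus x -> Lprod x <> 0.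
Proof.
  intro H; apply Uminus_iff in H as [_ [? [? ?]]]. unfold Lprod.
  repeat apply Rmult_integral_contrapositive_currified; assumption.
Qed.

Lemma gmap_sqrtp y : 0 <= c1 y -> 0 <= c2 y -> 0 <= c3 y -> gmap (sqrtp y) = y.
Proof. intros; apply pt_ext; unfold gmap, sqrtp; cbn [c1 c2 c3]; rewrite pow2_sqrt; auto. Qed.

Lemma sqrtp_scale k v : 0 <= k -> sqrtp (scale k v) = scale (sqrt k) (sqrtp v).
Proof. intro Hk; apply pt_ext; unfold sqrtp, scale; simpl; apply sqrt_mult_alt, Hk. Qed.

Lemma positive_sqrtp y : positive y -> positive (sqrtp y).
Proof. intros [? [? ?]]; repeat split; apply sqrt_lt_R0; assumption. Qed.

Lemma twist_sqrtp_gmap j v : positive (twist j v) -> twist j (sqrtp (gmap v)) = v.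
Proof.
  assert (K : forall s a, s = 1 \/ s = -1 -> 0 < s * a -> s * sqrt (a ^ 2) = a).
  { intros s a [-> | ->] Ha; rewrite <- Rsqr_pow2, sqrt_Rsqr_abs; unfold Rabs;
      destruct Rcase_abs; lra. }
  assert (Hs : forall i, sgn j i = 1 \/ sgn j i = -1) by (intro i; unfold sgn; destruct Nat.eqb; auto).
  intros [? [? ?]]; apply pt_ext; apply K; auto.
Qed.

Lemma twist_hmap j x : twist j (hmap x) =
  P3 (c1 x * (sgn j 1 * L1 x)) (c2 x * (sgn j 2 * L2 x)) (c3 x * (sgn j 3 * L3 x)).
Proof. pt_ring. Qed.

Lemma Ucomp_twist_hmap j x : (j <= 3)%nat -> U x ->
  Ucomp j x <-> positive (twist j (hmap x)).
Proof.
  intros Hj HU. rewrite Ucomp_signs, twist_hmap by exact Hj.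
  destruct (U_positive x HU) as [p1 [p2 p3]]. unfold positive, signs; cbn [c1 c2 c3].
  split; [intros [_ [? [? ?]]]|intros [? [? ?]]; split; [exact HU|]]; repeat split; nra.
Qed.

(* if twist j (hmap x) were a nonpositive multiple of a positive vector, two of
   the L_i x would be <= 0, which U_L_sums forbids *)
Lemma Ucomp_of_twist_hmap j x t w : (j <= 3)%nat -> U x -> positive w ->
  twist j (hmap x) = scale t w -> Ucomp j x.
Proof.
  intros Hj HU [w1 [w2 w3]] E. apply Ucomp_twist_hmap; [exact Hj|exact HU|].
  rewrite E. destruct (Rlt_or_le 0 t) as [Ht|Ht].
  - unfold positive, scale; cbn [c1 c2 c3]; repeat split; apply Rmult_lt_0_compat; assumption.
  - exfalso. rewrite twist_hmap in E. injection E as E1 E2 E3.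
    destruct (U_positive x HU) as [p1 [p2 p3]]. pose proof (U_L_sums x HU).
    assert (n1 : sgn j 1 * L1 x <= 0) by nra.
    assert (n2 : sgn j 2 * L2 x <= 0) by nra.
    assert (n3 : sgn j 3 * L3 x <= 0) by nra.
    revert n1 n2 n3; unfold sgn; destruct j as [|[|[|[|j]]]]; try lia; simpl; lra.
Qed.

Lemma rho_fhom_neg x : Uminus x -> rho (fhom x) < 0.
Proof.
  intro H. rewrite rho_fhom. pose proof (pow2_pos _ (Lprod_neq0 x H)).
  destruct H as [[_ Hr] _]. nra.
Qed.

Lemma fchart_in j x : (j <= 3)%nat -> Ucomp j x -> U (fchart x).
Proof. intros Hj H. apply U_nrm, rho_fhom_neg, (Ucomp_Uminus j x Hj H). Qed.

(* the inverse branch onto Ucomp j: choose the square roots with the signs of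
   Ucomp j, then undo h with h itself *)
Definition finv (j : nat) (y : pt) : pt := nrm (hmap (twist j (sqrtp y))).

Lemma gmap_branch j y : U y -> gmap (twist j (sqrtp y)) = y.
Proof.
  intro HU; destruct (U_positive y HU) as [? [? ?]].
  rewrite gmap_twist; apply gmap_sqrtp; lra.
Qed.

Lemma rho_hmap_branch j y : U y -> rho (hmap (twist j (sqrtp y))) < 0.
Proof. intro HU. rewrite rho_hmap, gmap_branch by exact HU. apply HU. Qed.

Lemma kinv_in j y : (j <= 3)%nat -> U y -> Ucomp j (finv j y).
Proof.
  intros Hj HU. set (z := twist j (sqrtp y)).
  assert (Hr := rho_hmap_branch j y HU); fold z in Hr.
  apply (Ucomp_of_twist_hmap j _ ((/ ssum (hmap z)) ^ 2 * Lprod z) (sqrtp y) Hj).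
  - apply U_nrm, Hr.
  - apply positive_sqrtp, U_positive, HU.
  - unfold finv; fold z.
    rewrite nrm_as_scale, hmap_scale, hmap_hmap, scale_scale, twist_scale.
    unfold z; rewrite twist_twist. reflexivity.
Qed.

Lemma fchart_kinv j y : U y -> fchart (finv j y) = y.
Proof.
  intro HU. set (z := twist j (sqrtp y)).
  assert (Hr := rho_hmap_branch j y HU); fold z in Hr.
  assert (HL : Lprod z <> 0).
  { intro E. rewrite rho_hmap, rho_gmap, E in Hr. lra. }
  pose proof (ssum_neq0_of_rho _ Hr) as Hs.
  unfold fchart, finv, fhom; fold z.
  rewrite (nrm_as_scale (hmap z)), hmap_scale, hmap_hmap, scale_scale, gmap_scale.
  unfold z; rewrite gmap_branch by exact HU; fold z.
  apply nrm_scale_chart; [|apply HU].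
  apply pow_nonzero, Rmult_integral_contrapositive_currified; [|exact HL].
  apply pow_nonzero, Rinv_neq_0_compat, Hs.
Qed.

Lemma kinv_fchart j x : (j <= 3)%nat -> Ucomp j x -> finv j (fchart x) = x.
Proof.
  intros Hj H. assert (HU : U x) by (apply Ucomp_signs in H; tauto).
  assert (Hpos := proj1 (Ucomp_twist_hmap j x Hj HU) H).
  assert (Hr := rho_fhom_neg x (Ucomp_Uminus j x Hj H)).
  assert (HS : 0 < ssum (fhom x)).
  { assert (0 <= ssum (fhom x)).
    { unfold ssum, fhom, gmap; cbn [c1 c2 c3].
      pose proof (pow2_ge_0 (c1 (hmap x))); pose proof (pow2_ge_0 (c2 (hmap x)));
        pose proof (pow2_ge_0 (c3 (hmap x))); lra. }
    pose proof (ssum_neq0_of_rho _ Hr). lra. }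
  unfold finv, fchart. rewrite (nrm_as_scale (fhom x)). unfold fhom at 2.
  rewrite sqrtp_scale by (left; apply Rinv_0_lt_compat, HS).
  rewrite twist_scale, twist_sqrtp_gmap, hmap_scale, hmap_hmap, scale_scale by exact Hpos.
  apply nrm_scale_chart; [|apply HU].
  rewrite pow2_sqrt by (left; apply Rinv_0_lt_compat, HS).
  apply Rmult_integral_contrapositive_currified; [apply Rinv_neq_0_compat; lra|].
  apply Lprod_neq0, (Ucomp_Uminus j x Hj H).
Qed.

Definition pcont_on (A : set) (G : pt -> pt) : Prop :=
  Rcont_on A (fun x => c1 (G x)) /\ Rcont_on A (fun x => c2 (G x)) /\
  Rcont_on A (fun x => c3 (G x)).

Lemma continuous_on_of_pcont A G : pcont_on A G -> continuous_on A G.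
Proof.
  intros [H1 [H2 H3]] x Ax e He.
  destruct (H1 x Ax (e / 3)) as [d1 [P1 K1]]; [lra|].
  destruct (H2 x Ax (e / 3)) as [d2 [P2 K2]]; [lra|].
  destruct (H3 x Ax (e / 3)) as [d3 [P3 K3]]; [lra|].
  exists (Rmin d1 (Rmin d2 d3)); split; [repeat apply Rmin_pos; assumption|].
  intros y Ay Hy.
  assert (Hy1 : dist x y < d1) by (eapply Rlt_le_trans; [exact Hy|apply Rmin_l]).
  assert (Hy2 : dist x y < d2)
    by (eapply Rlt_le_trans; [exact Hy|eapply Rle_trans; [apply Rmin_r|apply Rmin_l]]).
  assert (Hy3 : dist x y < d3)
    by (eapply Rlt_le_trans; [exact Hy|eapply Rle_trans; [apply Rmin_r|apply Rmin_r]]).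
  specialize (K1 y Ay Hy1); specialize (K2 y Ay Hy2); specialize (K3 y Ay Hy3).
  eapply Rle_lt_trans; [apply sqrt_sum_le_Rabs|lra].
Qed.

Ltac Rcont_poly :=
  repeat first [ assumption | apply Rcont_plus | apply Rcont_minus | apply Rcont_opp
               | apply Rcont_mult | apply Rcont_pow | apply Rcont_const ].

Lemma pcont_hmap A G : pcont_on A G -> pcont_on A (fun x => hmap (G x)).
Proof. intros [? [? ?]]; unfold hmap; cbn [c1 c2 c3]; repeat split; Rcont_poly. Qed.

Lemma pcont_gmap A G : pcont_on A G -> pcont_on A (fun x => gmap (G x)).
Proof. intros [? [? ?]]; unfold gmap; cbn [c1 c2 c3]; repeat split; Rcont_poly. Qed.

Lemma pcont_twist j A G : pcont_on A G -> pcont_on A (fun x => twist j (G x)).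
Proof. intros [? [? ?]]; unfold twist; cbn [c1 c2 c3]; repeat split; Rcont_poly. Qed.

Lemma pcont_sqrtp A : (forall y, A y -> positive y) -> pcont_on A sqrtp.
Proof.
  intro HA; unfold sqrtp; cbn [c1 c2 c3]; repeat split; apply Rcont_sqrt;
    [apply Rcont_c1| |apply Rcont_c2| |apply Rcont_c3|];
    intros y Ay; destruct (HA y Ay) as [? [? ?]]; lra.
Qed.

Lemma continuous_on_nrm A G : pcont_on A G -> (forall x, A x -> ssum (G x) <> 0) ->
  continuous_on A (fun x => nrm (G x)).
Proof.
  intros [? [? ?]] Hs. apply continuous_on_of_pcont.
  assert (Rcont_on A (fun x => / ssum (G x))) by (apply Rcont_inv; [unfold ssum; Rcont_poly|exact Hs]).
  unfold nrm, Rdiv; cbn [c1 c2 c3]; repeat split; Rcont_poly.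
Qed.

Lemma fchart_continuous j : (j <= 3)%nat -> continuous_on (Ucomp j) fchart.
Proof.
  intro Hj. apply (continuous_on_nrm _ fhom).
  - apply pcont_gmap, pcont_hmap. repeat split; [apply Rcont_c1|apply Rcont_c2|apply Rcont_c3].
  - intros x H. apply ssum_neq0_of_rho, rho_fhom_neg, (Ucomp_Uminus j x Hj H).
Qed.

Lemma kinv_continuous j : continuous_on U (finv j).
Proof.
  apply (continuous_on_nrm _ (fun y => hmap (twist j (sqrtp y)))).
  - apply pcont_hmap, pcont_twist, pcont_sqrtp, U_positive.
  - intros y HU. apply ssum_neq0_of_rho, rho_hmap_branch, HU.
Qed.

Theorem Ucomp_homeo j : (j <= 3)%nat -> homeo_onto fchart (Ucomp j) U.
Proof.
  intro Hj. split; [intros x; apply fchart_in, Hj|].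
  split; [apply fchart_continuous, Hj|].
  exists (finv j). split; [intros y; apply kinv_in, Hj|].
  split; [intros x; apply kinv_fchart, Hj|].
  split; [intros y; apply fchart_kinv|apply kinv_continuous].
Qed.

Theorem mainTheorem17 :
  (forall C : set, is_component Uminus C <->
     exists j : nat, (j <= 3)%nat /\ seteq C (Ucomp j)) /\
  (forall i j : nat, (i <= 3)%nat -> (j <= 3)%nat -> i <> j ->
     ~ seteq (Ucomp i) (Ucomp j)) /\
  (forall j : nat, (j <= 3)%nat -> homeo_onto fchart (Ucomp j) U).
Proof.
  split; [exact Uminus_components|].
  split; [exact Ucomp_distinct|exact Ucomp_homeo].
Qed.
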